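(* Let $\mathcal{D}=\{(x^{(i)},y^{(i)})\}_{i=1}^N$ be a finite paired dataset with $x^{(i)}\in\mathbb{R}^{d_x}$, $y^{(i)}\in\mathbb{R}^{d_y}$, let $d>d_x$ and $d>d_y$, and let $\alpha,\beta:[0,1]\to\mathbb{R}$ be smooth functions that are nonzero except possibly at $t=0$ and $t=1$. Then there exist a data encoder $f_\phi:\mathbb{R}^{d_x}\to\mathbb{R}^d$ and a label encoder $g_\varphi:\mathbb{R}^{d_y}\to\mathbb{R}^d$ such that $(f_\phi,g_\varphi)$ does not induce a target trajectory crossing for data pairs in $\mathcal{D}$, while $g_\varphi$ (together with a suitable label decoder $d_\psi:\mathbb{R}^d\to\mathbb{R}^{d_y}$) minimizes the label autoencoding loss $\mathcal{L}_{label\_ae}(\psi,\varphi)=\mathbb{E}_{(x,y)\sim\mathcal{D}}\big[\|d_\psi(g_\varphi(y))-y\|_2^2\big]$.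
   Context: Given encoders $f_\phi,g_\varphi$, one sets $z_0=f_\phi(x)$, $z_1=g_\varphi(y)$ and uses the predefined interpolation $z_t=F(z_0,z_1,t)=\alpha_t z_0+\beta_t z_1$ for $t\in[0,1]$. The encoders $(f_\phi,g_\varphi)$ are said to induce a target trajectory crossing if there exists a tuple $(t,x,y,x',y')$, with $(x,y),(x',y')$ data pairs in $\mathcal{D}$, $t\in[0,1]$, $x\neq x'$ and $y\neq y'$, such that $\alpha_t f_\phi(x)+\beta_t g_\varphi(y)=\alpha_t f_\phi(x')+\beta_t g_\varphi(y')$. ''Non-crossing'' means no such tuple exists. *)

From HB Require Import structures.
From mathcomp Require Import all_boot all_order all_algebra.
From mathcomp Require Import all_classical all_reals all_analysis.
Set Implicit Arguments. Unset Strict Implicit. Unset Printing Implicit Defensive.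
Import Order.TTheory GRing.Theory Num.Theory.
Local Open Scope ring_scope.

(* f is smooth on [0,1]: every iterated derivative is differentiable at every
   point of [0,1] (two-sided derivatives, i.e. f is C^oo on a neighbourhood). *)
Definition smooth_on01 {R : realType} (f : R -> R) : Prop :=
  forall (n : nat) (t : R), 0 <= t <= 1 -> derivable (derive1n n f) t 1.

Definition sqnorm {R : realType} {n : nat} (v : 'rV[R]_n) : R :=
  \sum_(i < n) (v ord0 i) ^+ 2.

Definition label_ae_loss {R : realType} {N dx dy d : nat}
  (D : 'I_N -> 'rV[R]_dx * 'rV[R]_dy)
  (dec : 'rV[R]_d -> 'rV[R]_dy) (enc : 'rV[R]_dy -> 'rV[R]_d) : R :=
  N%:R^-1 * \sum_(i < N) sqnorm (dec (enc (D i).2) - (D i).2).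

Definition trajectory_crossing {R : realType} {N dx dy d : nat}
  (alpha beta : R -> R) (D : 'I_N -> 'rV[R]_dx * 'rV[R]_dy)
  (f : 'rV[R]_dx -> 'rV[R]_d) (g : 'rV[R]_dy -> 'rV[R]_d) : Prop :=
  exists (t : R) (i j : 'I_N),
    0 <= t <= 1 /\ (D i).1 <> (D j).1 /\ (D i).2 <> (D j).2 /\
    alpha t *: f (D i).1 + beta t *: g (D i).2
      = alpha t *: f (D j).1 + beta t *: g (D j).2.

(* The label encoder zero-pads y into the first dy coordinates, so truncation
   decodes it exactly and the autoencoding loss attains its minimum 0. The data
   encoder writes the position of x in the dataset into the spare coordinate dy,
   which the label encoder leaves at 0. On that coordinate the interpolant reads
   alpha t * (position of x), so for t < 1 (where alpha t <> 0) two equal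
   interpolants have equal data points; at t = 1 the interpolant is the
   injective g y. *)
From HB Require Import structures.
From mathcomp Require Import all_boot all_order all_algebra.
From mathcomp Require Import all_classical all_reals all_analysis.
Set Implicit Arguments. Unset Strict Implicit. Unset Printing Implicit Defensive.
Import Order.TTheory GRing.Theory Num.Theory.
Local Open Scope ring_scope.

Section Padding.
Variables (R : nmodType) (m n : nat).

Definition pad_row (v : 'rV[R]_m) : 'rV[R]_n :=
  \row_k (if insub (val k) is Some k' then v ord0 k' else 0).

Definition trunc_row (le_mn : (m <= n)%N) (v : 'rV[R]_n) : 'rV[R]_m :=
  \row_k v ord0 (widen_ord le_mn k).

Lemma pad_rowK (le_mn : (m <= n)%N) : cancel pad_row (trunc_row le_mn).
Proof.
move=> v; apply/rowP => k; rewrite !mxE.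
case: insubP => [k' _ /= eq_k'k|/=]; last by rewrite ltn_ord.
by rewrite (ord1 ord0); congr (v _ _); apply: val_inj.
Qed.

Lemma pad_row_out (v : 'rV[R]_m) (k : 'I_n) : (m <= k)%N -> pad_row v ord0 k = 0.
Proof. by move=> le_mk; rewrite mxE insubF // ltnNge le_mk. Qed.

End Padding.

Section LabelLoss.
Variables (R : realType) (N dx dy : nat) (D : 'I_N -> 'rV[R]_dx * 'rV[R]_dy).

Lemma sqnorm_ge0 n (v : 'rV[R]_n) : 0 <= sqnorm v.
Proof. by apply: sumr_ge0 => k _; apply: sqr_ge0. Qed.

Lemma label_ae_loss_ge0 d (dec : 'rV[R]_d -> 'rV[R]_dy) enc :
  0 <= label_ae_loss D dec enc.
Proof.
by rewrite mulr_ge0 ?invr_ge0 ?ler0n ?sumr_ge0 // => i _; apply: sqnorm_ge0.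
Qed.

Lemma label_ae_loss_can0 d (dec : 'rV[R]_d -> 'rV[R]_dy) enc :
  cancel enc dec -> label_ae_loss D dec enc = 0.
Proof.
move=> encK; rewrite /label_ae_loss big1 ?mulr0 // => i _.
by rewrite encK subrr /sqnorm big1 // => k _; rewrite mxE expr0n.
Qed.

End LabelLoss.

Section Crossing.
Variables (R : realType) (N dx dy d : nat) (D : 'I_N -> 'rV[R]_dx * 'rV[R]_dy).
Variables (alpha beta : R -> R) (f : 'rV[R]_dx -> 'rV[R]_d) (g : 'rV[R]_dy -> 'rV[R]_d).

Lemma no_crossing_of_separating_coord (k : 'I_d) :
  alpha 1 = 0 -> beta 1 != 0 -> (forall t, 0 <= t < 1 -> alpha t != 0) ->
  injective g -> (forall y, g y ord0 k = 0) ->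
  (forall i j, f (D i).1 ord0 k = f (D j).1 ord0 k -> (D i).1 = (D j).1) ->
  ~ trajectory_crossing alpha beta D f g.
Proof.
move=> a1 b1 a_neq0 g_inj gk0 fk_inj [t [i [j [/andP[t0 t1] [nx [ny eq_z]]]]]].
have [t_eq1|t_neq1] := eqVneq t 1.
  move: eq_z; rewrite t_eq1 a1 !scale0r !add0r => /(scalerI b1)/g_inj.
  exact: ny.
apply/nx/fk_inj/(mulfI (a_neq0 t _)); first by rewrite t0 lt_neqAle t_neq1.
move/(congr1 (fun z : 'rV[R]_d => z ord0 k)): eq_z.
by rewrite !mxE !gk0 !mulr0 !addr0.
Qed.

End Crossing.

Section Encoders.
Variables (R : realType) (N dx dy d : nat) (D : 'I_N -> 'rV[R]_dx * 'rV[R]_dy).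
Hypothesis lt_dy_d : (dy < d)%N.

Definition tag_coord : 'I_d := Ordinal lt_dy_d.

Definition data_encoder (x : 'rV[R]_dx) : 'rV[R]_d :=
  (index x (codom (fun i => (D i).1)))%:R *: delta_mx 0 tag_coord.

Lemma data_encoder_tag_inj i j :
  data_encoder (D i).1 ord0 tag_coord = data_encoder (D j).1 ord0 tag_coord ->
  (D i).1 = (D j).1.
Proof.
rewrite !mxE !eqxx !mulr1 => /eqP; rewrite eqr_nat => /eqP.
(* The first argument of index_inj is an irrelevant default element. *)
by apply: (index_inj (D i).1); apply: codom_f.
Qed.

End Encoders.

Theorem proposition1 (R : realType) (N dx dy d : nat)
  (D : 'I_N -> 'rV[R]_dx * 'rV[R]_dy) (alpha beta : R -> R) :
  (dx < d)%N -> (dy < d)%N ->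
  smooth_on01 alpha -> smooth_on01 beta ->
  (forall t : R, 0 < t < 1 -> alpha t != 0) ->
  (forall t : R, 0 < t < 1 -> beta t != 0) ->
  alpha 0 = 1 -> beta 0 = 0 -> alpha 1 = 0 -> beta 1 = 1 ->
  exists (f : 'rV[R]_dx -> 'rV[R]_d) (g : 'rV[R]_dy -> 'rV[R]_d)
         (dec : 'rV[R]_d -> 'rV[R]_dy),
    ~ trajectory_crossing alpha beta D f g /\
    (forall (dec' : 'rV[R]_d -> 'rV[R]_dy) (g' : 'rV[R]_dy -> 'rV[R]_d),
        label_ae_loss D dec g <= label_ae_loss D dec' g').
Proof.
move=> _ lt_dy_d _ _ alpha_neq0 _ a0 _ a1 b1.
have le_dy_d := ltnW lt_dy_d.
exists (data_encoder D lt_dy_d), (pad_row d), (trunc_row le_dy_d); split.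
  apply: (no_crossing_of_separating_coord (k := tag_coord lt_dy_d)) => //.
  - by rewrite b1 oner_neq0.
  - move=> t /andP[]; rewrite le_eqVlt => /predU1P[<- _|t0 t1].
      by rewrite a0 oner_neq0.
    by apply: alpha_neq0; rewrite t0.
  - exact: can_inj (pad_rowK le_dy_d).
  - by move=> y; apply: pad_row_out.
  - exact: data_encoder_tag_inj.
move=> dec' g'.
by rewrite (label_ae_loss_can0 D (pad_rowK le_dy_d)) label_ae_loss_ge0.
Qed.
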